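(* Let $\mathbb D^2=\{x\in\mathbb R^2:|x|<1\}$, let $a=(a_1,0)$ with $a_1\ne0$, $|a_1|<1$, and let $$\mathcal F_a(x,y)=\frac{\sqrt{|y|^2-\left(|x|^2|y|^2-\langle x,y\rangle^2\right)}}{1-|x|^2}+\frac{\langle x,y\rangle}{1-|x|^2}+\frac{\langle a,y\rangle}{1+\langle a,x\rangle}.$$ Parametrize the indicatrix $\mathcal I_0=\{y\in T_0\mathbb D^2:\mathcal F_a(0,y)=1\}$ by $t\mapsto\left(\frac{\cos t}{1+a_1\cos t},\frac{\sin t}{1+a_1\cos t}\right)$, $t\in\mathbb R/2\pi\mathbb Z$. Let $\xi_0$ be the restriction to $\mathcal I_0$ of the curvature vector field $R(\partial_{x_1},\partial_{x_2})$, and for integers $l,m\ge0$ let $\xi_0^{l,m}=(\sin^l t\cos^m t)\,\xi_0\in\mathfrak X^\infty(\mathcal I_0)$. For $n\in\mathbb N$ put $\Sigma_n=\mathrm{Span}_{\mathbb R}\{\xi_0^{l,m}: l+m\le n\}$. Then for every $n\in\mathbb N$, $\Sigma_n\subset\mathfrak{hol}^*_0(\mathbb D^2)$, the infinitesimal holonomy algebra at $0$.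
   Context: For a Finsler manifold $(M,\mathcal F)$ with geodesic coefficients $G^i(x,y)=\frac14 g^{il}\big(2\frac{\partial g_{jl}}{\partial x^k}-\frac{\partial g_{jk}}{\partial x^l}\big)y^jy^k$ (where $g_{ij}=\frac12\partial^2\mathcal F^2/\partial y^i\partial y^j$), set $G^i_j=\partial G^i/\partial y^j$, $G^i_{jk}=\partial G^i_j/\partial y^k$. The curvature tensor is $R=R^i_{jk}\,dx^j\otimes dx^k\otimes\frac{\partial}{\partial y^i}$ with $R^i_{jk}=\frac{\partial G^i_j}{\partial x^k}-\frac{\partial G^i_k}{\partial x^j}+G^m_jG^i_{km}-G^m_kG^i_{jm}$; for vector fields $X,Y$ on $M$, $R(X,Y)$ is a vector field on $TM$ (a curvature vector field). The horizontal Berwald covariant derivative of a vertical vector field $\xi=\xi^i(x,y)\partial_{y^i}$ along $X=X^j\partial_{x^j}$ is $\nabla_X\xi=\big(\frac{\partial\xi^i}{\partial x^j}-G^k_j\frac{\partial\xi^i}{\partial y^k}+G^i_{jk}\xi^k\big)X^j\partial_{y^i}$. The infinitesimal holonomy algebra $\mathfrak{hol}^*(M)$ is the smallest Lie algebra of vector fields on $TM$ containing all curvature vector fields and closed under $\xi\mapsto\nabla_X\xi$ for all vector fields $X$ on $M$; $\mathfrak{hol}^*_x(M)=\{\xi|_{\mathcal I_x}:\xi\in\mathfrak{hol}^*(M)\}$, a Lie subalgebra of $\mathfrak X^\infty(\mathcal I_x)$, where $\mathcal I_x=\{y\in T_xM:\mathcal F(y)=1\}$. *)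

From Stdlib Require Import Reals List.
From Coquelicot Require Import Coquelicot.
Open Scope R_scope.

(** Coordinates on the disk D^2 and on T_x D^2 = R^2 are pairs (R*R).
    Indices i,j,k,... range over {0,1} (coordinate 0 = first, 1 = second);
    all index sums are written with [sum2]. *)

Definition coord (p : R * R) (j : nat) : R :=
  match j with O => fst p | _ => snd p end.

Definition upd (p : R * R) (j : nat) (s : R) : R * R :=
  match j with O => (s, snd p) | _ => (fst p, s) end.

Definition sum2 (F : nat -> R) : R := F O + F 1%nat.

Definition dot (u v : R * R) : R := fst u * fst v + snd u * snd v.
Definition sqn (u : R * R) : R := dot u u.

Definition in_disk (p : R * R) : Prop := sqn p < 1.

Definition dX (j : nat) (h : R * R -> R * R -> R) : R * R -> R * R -> R :=
  fun x y => Derive (fun s => h (upd x j s) y) (coord x j).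
Definition dY (k : nat) (h : R * R -> R * R -> R) : R * R -> R * R -> R :=
  fun x y => Derive (fun s => h x (upd y k s)) (coord y k).

Fixpoint pder (l : list nat) (f : R * R -> R) : R * R -> R :=
  match l with
  | nil => f
  | j :: l' => fun p => Derive (fun s => pder l' f (upd p j s)) (coord p j)
  end.

Definition smooth_on_disk (f : R * R -> R) : Prop :=
  forall (l : list nat) (p : R * R), in_disk p ->
    continuous (pder l f) p /\
    forall j : nat, ex_derive (fun s => pder l f (upd p j s)) (coord p j).

Definition smooth_vf (X : R * R -> R * R) : Prop :=
  smooth_on_disk (fun p => fst (X p)) /\ smooth_on_disk (fun p => snd (X p)).

Definition Fa (a1 : R) (x y : R * R) : R :=
  sqrt (sqn y - (sqn x * sqn y - (dot x y) ^ 2)) / (1 - sqn x)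
  + dot x y / (1 - sqn x)
  + dot (a1, 0) y / (1 + dot (a1, 0) x).

Definition Esq (a1 : R) : R * R -> R * R -> R := fun x y => (Fa a1 x y) ^ 2.

Definition gm (a1 : R) (i j : nat) : R * R -> R * R -> R :=
  fun x y => / 2 * dY i (dY j (Esq a1)) x y.

Definition gdet (a1 : R) (x y : R * R) : R :=
  gm a1 0 0 x y * gm a1 1 1 x y - gm a1 0 1 x y * gm a1 1 0 x y.

Definition ginv (a1 : R) (i l : nat) (x y : R * R) : R :=
  match i, l with
  | O, O => gm a1 1 1 x y / gdet a1 x y
  | O, _ => - gm a1 0 1 x y / gdet a1 x y
  | _, O => - gm a1 1 0 x y / gdet a1 x y
  | _, _ => gm a1 0 0 x y / gdet a1 x y
  end.

Definition Gc (a1 : R) (i : nat) : R * R -> R * R -> R :=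
  fun x y => / 4 * sum2 (fun l => ginv a1 i l x y *
     sum2 (fun j => sum2 (fun k =>
       (2 * dX k (gm a1 j l) x y - dX l (gm a1 j k) x y)
       * coord y j * coord y k))).

Definition G1 (a1 : R) (i j : nat) : R * R -> R * R -> R := dY j (Gc a1 i).
Definition G2 (a1 : R) (i j k : nat) : R * R -> R * R -> R := dY k (G1 a1 i j).

Definition Rc (a1 : R) (i j k : nat) : R * R -> R * R -> R :=
  fun x y => dX k (G1 a1 i j) x y - dX j (G1 a1 i k) x y
    + sum2 (fun m => G1 a1 m j x y * G2 a1 i k m x y
                     - G1 a1 m k x y * G2 a1 i j m x y).

(** Vertical vector fields xi = xi^i(x,y) d_{y^i} on TM, given by their
    components xi i (i = 0, 1). *)
Definition vfield := nat -> R * R -> R * R -> R.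

Definition curv (a1 : R) (X Y : R * R -> R * R) : vfield :=
  fun i x y => sum2 (fun j => sum2 (fun k =>
     Rc a1 i j k x y * coord (X x) j * coord (Y x) k)).

Definition nabla (a1 : R) (X : R * R -> R * R) (xi : vfield) : vfield :=
  fun i x y => sum2 (fun j =>
     (dX j (xi i) x y
      - sum2 (fun k => G1 a1 k j x y * dY k (xi i) x y)
      + sum2 (fun k => G2 a1 i j k x y * xi k x y)) * coord (X x) j).

Definition vbracket (xi eta : vfield) : vfield :=
  fun i x y => sum2 (fun k => xi k x y * dY k (eta i) x y
                              - eta k x y * dY k (xi i) x y).

Inductive hol (a1 : R) : vfield -> Prop :=
| hol_curv X Y : smooth_vf X -> smooth_vf Y -> hol a1 (curv a1 X Y)
| hol_add xi eta : hol a1 xi -> hol a1 eta ->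
    hol a1 (fun i x y => xi i x y + eta i x y)
| hol_scal (c : R) xi : hol a1 xi -> hol a1 (fun i x y => c * xi i x y)
| hol_bracket xi eta : hol a1 xi -> hol a1 eta -> hol a1 (vbracket xi eta)
| hol_nabla X xi : smooth_vf X -> hol a1 xi -> hol a1 (nabla a1 X xi).

Definition gam (a1 t : R) : R * R :=
  (cos t / (1 + a1 * cos t), sin t / (1 + a1 * cos t)).

Definition xi0 (a1 : R) (i : nat) (y : R * R) : R := Rc a1 i 0 1 (0, 0) y.

(* Near the origin [Fa] is the Funk metric of the disk plus the exact form
   [beta = d log (1 + <a, x>)], so its spray is projective: [G^i = P y^i] with
   [P = (funk - beta) / 2].  This yields closed forms for the curvature field
   [xi = R(d_1, d_2) = (F / 4) (F_{y^2}, - F_{y^1})] and shows that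
   [nabla_(d_m) xi = 3 P_{y^m} xi] and [nabla_(d_1) nabla_(d_2) xi] are
   multiples of [xi].  At [x = 0], writing [y = |y| (cos t, sin t)], these
   multiples give [cos t], [sin t] and [sin t cos t] as multipliers (functions
   [h] with [h xi_0] in hol*_0), and the bracket acts on multipliers as the
   derivation [xi], with
   [xi(cos t) = (1 + a cos t)^2 sin t / 4] and
   [xi(sin t) = - (1 + a cos t)^2 cos t / 4].  As [a <> 0], the top-degree
   terms of [xi(cos^(n+1) t)] and [xi(sin t cos^(n+1) t)] can be solved for
   [sin t cos^(n+2) t] and [cos^(n+3) t]; with [sin^2 t = 1 - cos^2 t] this
   gives every monomial [sin^l t cos^m t] by induction on the degree. *)

From Pilot Require Import Defs.
From Stdlib Require Import Reals Lra Lia List Wf_nat.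
From Coquelicot Require Import Coquelicot.
Import ListNotations.
Open Scope R_scope.
(* Without it, rewriting with the closed forms below unfolds the Finsler
   definitions of [Defs] and does not terminate in reasonable time. *)
Set Keyed Unification.

Create HintDb closed_derivatives.

Ltac nonzero := repeat match goal with
  | |- _ /\ _ => split
  | |- True => exact I
  | |- _ * _ <> 0 => apply Rmult_integral_contrapositive_currified
  | |- _ ^ _ <> 0 => apply pow_nonzero
  | |- _ <> 0 => first [assumption | lra]
  | |- 0 < _ => first [assumption | lra]
  end.

Lemma is_derive_val (f : R -> R) (s l1 l2 : R) : is_derive f s l1 -> l1 = l2 -> is_derive f s l2.
Proof. intros H <-; exact H. Qed.

Lemma is_derive_Rconst (c s : R) : is_derive (fun _ => c) s 0.
Proof. exact (is_derive_const c s). Qed.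

Lemma is_derive_Rplus (f g : R -> R) s df dg :
  is_derive f s df -> is_derive g s dg -> is_derive (fun t => f t + g t) s (df + dg).
Proof. apply (is_derive_plus f g). Qed.

Lemma is_derive_Rminus (f g : R -> R) s df dg :
  is_derive f s df -> is_derive g s dg -> is_derive (fun t => f t - g t) s (df - dg).
Proof. apply (is_derive_minus f g). Qed.

Lemma is_derive_Rmult (f g : R -> R) s df dg :
  is_derive f s df -> is_derive g s dg ->
  is_derive (fun t => f t * g t) s (df * g s + f s * dg).
Proof. intros; apply (is_derive_mult f g); auto. intros; apply Rmult_comm. Qed.

Lemma is_derive_Ropp (f : R -> R) s df : is_derive f s df -> is_derive (fun t => - f t) s (- df).
Proof. apply (is_derive_opp f). Qed.

Lemma is_derive_Rdiv_const (f : R -> R) s df c :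
  is_derive f s df -> is_derive (fun t => f t / c) s (df / c).
Proof.
  intros H. eapply is_derive_val.
  - exact (is_derive_Rmult f (fun _ => / c) s df 0 H (is_derive_Rconst _ _)).
  - unfold Rdiv; ring.
Qed.

Lemma upd_coord (p : R * R) j : upd p j (coord p j) = p.
Proof. destruct p, j; reflexivity. Qed.

Definition kdelta (i j : nat) : R := match i, j with O, O | S _, S _ => 1 | _, _ => 0 end.

Lemma is_derive_coord (p : R * R) i j :
  is_derive (fun s => coord (upd p j s) i) (coord p j) (kdelta i j).
Proof. destruct p, i, j; simpl; auto_derive; auto; ring. Qed.

Lemma locally_pos (f : R -> R) s0 : ex_derive f s0 -> 0 < f s0 -> locally s0 (fun s => 0 < f s).
Proof.
  intros Hd Hp. exact (ex_derive_continuous f s0 Hd _ (open_gt 0 (f s0) Hp)).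
Qed.

(* Differentiates a term built with [+ - * /c] from functions whose derivatives
   are hypotheses, leaving the identification of the derivative as a goal. *)
Ltac derive_from_hyps :=
  eapply is_derive_val;
  [ repeat lazymatch goal with
    | |- is_derive (fun _ => ?c) _ _ => apply is_derive_Rconst
    | |- is_derive (fun s => _ + _) _ _ => apply is_derive_Rplus
    | |- is_derive (fun s => _ - _) _ _ => apply is_derive_Rminus
    | |- is_derive (fun s => _ * _) _ _ => apply is_derive_Rmult
    | |- is_derive (fun s => - _) _ _ => apply is_derive_Ropp
    | |- is_derive (fun s => _ / ?c) _ _ => apply is_derive_Rdiv_const
    | |- _ => solve [eauto with closed_derivatives]
    end
  | cbv beta; rewrite ?upd_coord ].

Global Hint Resolve is_derive_coord : closed_derivatives.

(** * The Funk metric and the exact form [beta] *)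

Definition radicand (x y : R * R) : R := sqn y - (sqn x * sqn y - dot x y ^ 2).

Definition funk (x y : R * R) : R :=
  sqrt (radicand x y) / (1 - sqn x) + dot x y / (1 - sqn x).

Definition funk_grad (x y : R * R) (l : nat) : R :=
  ((1 - sqn x) * coord y l + dot x y * coord x l) / (sqrt (radicand x y) * (1 - sqn x))
  + coord x l / (1 - sqn x).

Definition perp (y : R * R) (l : nat) : R := match l with O => - snd y | _ => fst y end.

Definition hess_scale (x y : R * R) : R := / sqrt (radicand x y) ^ 3.

Definition beta (a : R) (x y : R * R) : R := dot (a, 0) y / (1 + dot (a, 0) x).

Definition beta_coef (a : R) (x : R * R) (l : nat) : R := coord (a, 0) l / (1 + dot (a, 0) x).

Lemma Fa_split a x y : Fa a x y = funk x y + beta a x y.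
Proof. reflexivity. Qed.

Ltac derive_closed HA :=
  let Hr := fresh "Hr" in let Hp := fresh "Hp" in
  pose proof (sqrt_sqrt _ (Rlt_le _ _ HA)) as Hr; pose proof (sqrt_lt_R0 _ HA) as Hp;
  auto_derive; unfold Rminus in *; nonzero; (field [Hr]; nonzero).

Section FunkDerivatives.
Variables (x y : R * R).
Hypotheses (Hrad : 0 < radicand x y) (Hdisk : 1 - sqn x <> 0).

Ltac expand := destruct x as [x0 x1], y as [y0 y1];
  unfold funk, funk_grad, hess_scale, perp, radicand, sqn, dot in *; simpl in *.

Lemma is_derive_funk_y k :
  is_derive (fun s => funk x (upd y k s)) (coord y k) (funk_grad x y k).
Proof. expand; destruct k; simpl; derive_closed Hrad. Qed.

Lemma is_derive_funk_x k :
  is_derive (fun s => funk (upd x k s) y) (coord x k) (funk x y * funk_grad x y k).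
Proof. expand; destruct k; simpl; derive_closed Hrad. Qed.

Lemma is_derive_funk_grad_y l k :
  is_derive (fun s => funk_grad x (upd y k s) l) (coord y k)
    (hess_scale x y * perp y l * perp y k).
Proof. expand; destruct k, l; simpl; derive_closed Hrad. Qed.

Lemma is_derive_funk_grad_x l k :
  is_derive (fun s => funk_grad (upd x k s) y l) (coord x k)
    (funk_grad x y l * funk_grad x y k + funk x y * (hess_scale x y * perp y l * perp y k)).
Proof. expand; destruct k, l; simpl; derive_closed Hrad. Qed.

Lemma ex_derive_hess_scale_x k : ex_derive (fun s => hess_scale (upd x k s) y) (coord x k).
Proof.
  pose proof (sqrt_lt_R0 _ Hrad).
  expand; destruct k; simpl; auto_derive; unfold Rminus in *; nonzero.
Qed.

Lemma funk_euler : funk_grad x y 0 * fst y + funk_grad x y 1 * snd y = funk x y.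
Proof.
  pose proof (sqrt_sqrt _ (Rlt_le _ _ Hrad)) as Hr; pose proof (sqrt_lt_R0 _ Hrad).
  expand; field [Hr]; nonzero.
Qed.

End FunkDerivatives.

Section BetaDerivatives.
Variables (a : R) (x y : R * R).
Hypothesis (Hbeta : 1 + dot (a, 0) x <> 0).

Ltac expand := destruct x as [x0 x1], y as [y0 y1]; unfold beta, beta_coef, dot in *; simpl in *.

Lemma is_derive_beta_y k :
  is_derive (fun s => beta a x (upd y k s)) (coord y k) (beta_coef a x k).
Proof. expand; destruct k; simpl; auto_derive; nonzero; field; nonzero. Qed.

Lemma is_derive_beta_x k :
  is_derive (fun s => beta a (upd x k s) y) (coord x k) (- beta_coef a x k * beta a x y).
Proof. expand; destruct k; simpl; auto_derive; nonzero; field; nonzero. Qed.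

Lemma is_derive_beta_coef_x l k :
  is_derive (fun s => beta_coef a (upd x k s) l) (coord x k)
    (- beta_coef a x k * beta_coef a x l).
Proof. expand; destruct k, l; simpl; auto_derive; nonzero; field; nonzero. Qed.

Lemma beta_euler : beta_coef a x 0 * fst y + beta_coef a x 1 * snd y = beta a x y.
Proof. expand; field; nonzero. Qed.

End BetaDerivatives.

Global Hint Resolve is_derive_funk_y is_derive_funk_x is_derive_funk_grad_y
  is_derive_funk_grad_x is_derive_beta_y is_derive_beta_x is_derive_beta_coef_x
  : closed_derivatives.

Definition regular (a : R) (x y : R * R) : Prop :=
  0 < sqn y /\ 0 < 1 - sqn x /\ 0 < 1 + dot (a, 0) x /\ 0 < Fa a x y.

Lemma radicand_pos x y : 0 < sqn y -> 0 < 1 - sqn x -> 0 < radicand x y.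
Proof.
  unfold radicand; intros Hy Hx.
  assert (0 < (1 - sqn x) * sqn y) by (apply Rmult_lt_0_compat; lra).
  pose proof (pow2_ge_0 (dot x y)). lra.
Qed.

Definition Fa_y (a : R) (x y : R * R) (l : nat) : R :=
  funk_grad x y l + beta_coef a x l.
Definition Fa_yy (x y : R * R) (l k : nat) : R :=
  hess_scale x y * perp y l * perp y k.
Definition Fa_x (a : R) (x y : R * R) (k : nat) : R :=
  funk x y * funk_grad x y k - beta_coef a x k * beta a x y.
Definition Fa_yx (a : R) (x y : R * R) (l k : nat) : R :=
  funk_grad x y l * funk_grad x y k + funk x y * Fa_yy x y l k - beta_coef a x k * beta_coef a x l.

Definition spray_factor (a : R) (x y : R * R) : R :=
  (funk x y - beta a x y) / 2.
Definition spray_factor_y (a : R) (x y : R * R) (j : nat) : R :=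
  (funk_grad x y j - beta_coef a x j) / 2.
Definition spray_factor_x (a : R) (x y : R * R) (k : nat) : R :=
  (funk x y * funk_grad x y k + beta_coef a x k * beta a x y) / 2.
Definition spray_factor_yx (a : R) (x y : R * R) (j k : nat) : R :=
  (funk_grad x y j * funk_grad x y k + funk x y * Fa_yy x y j k
   + beta_coef a x j * beta_coef a x k) / 2.

Definition metric (a : R) (x y : R * R) (i j : nat) : R :=
  Fa_y a x y i * Fa_y a x y j + Fa a x y * Fa_yy x y i j.

Definition metric_x (a : R) (x y : R * R) (j l k : nat) : R :=
  Fa_yx a x y j k * Fa_y a x y l + Fa_y a x y j * Fa_yx a x y l k + Fa_x a x y k * Fa_yy x y j l
  + Fa a x y * (Derive (fun s => hess_scale (upd x k s) y) (coord x k) * perp y j * perp y l).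

Definition curv_field (a : R) (x y : R * R) (i : nat) : R :=
  Fa a x y / 4 * (kdelta i 0 * Fa_y a x y 1 - kdelta i 1 * Fa_y a x y 0).

Definition curv_field_x (a : R) (x y : R * R) (i j : nat) : R :=
  Fa_x a x y j / 4 * (kdelta i 0 * Fa_y a x y 1 - kdelta i 1 * Fa_y a x y 0)
  + Fa a x y / 4 * (kdelta i 0 * Fa_yx a x y 1 j - kdelta i 1 * Fa_yx a x y 0 j).

Definition curv_field_y (a : R) (x y : R * R) (i k : nat) : R :=
  Fa_y a x y k / 4 * (kdelta i 0 * Fa_y a x y 1 - kdelta i 1 * Fa_y a x y 0)
  + Fa a x y / 4 * (kdelta i 0 * Fa_yy x y 1 k - kdelta i 1 * Fa_yy x y 0 k).

Definition nabla2_factor (a : R) (x y : R * R) (j k : nat) : R :=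
  3 / 4 * (Fa_y a x y j * Fa_y a x y k + Fa a x y * Fa_yy x y j k)
  + 12 * spray_factor_y a x y j * spray_factor_y a x y k.

Definition coord_field (m : nat) : R * R -> R * R := fun _ => (kdelta m 0, kdelta m 1).

Section RegularDerivatives.
Variables (a : R) (x y : R * R).
Hypothesis Hreg : regular a x y.

Let Hrad : 0 < radicand x y.
Proof. destruct Hreg as (Hy & Hx & _); exact (radicand_pos x y Hy Hx). Qed.
Let Hdisk : 1 - sqn x <> 0.
Proof. destruct Hreg as (_ & Hx & _); lra. Qed.
Let Hbeta : 1 + dot (a, 0) x <> 0.
Proof. destruct Hreg as (_ & _ & Hb & _); lra. Qed.

Lemma is_derive_Fa_y k : is_derive (fun s => Fa a x (upd y k s)) (coord y k) (Fa_y a x y k).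
Proof.
  exact (is_derive_Rplus (fun s => funk x (upd y k s)) (fun s => beta a x (upd y k s)) _ _ _
    (is_derive_funk_y x y Hrad Hdisk k) (is_derive_beta_y a x y Hbeta k)).
Qed.

Lemma is_derive_Fa_y_y l k :
  is_derive (fun s => Fa_y a x (upd y k s) l) (coord y k) (Fa_yy x y l k).
Proof. unfold Fa_y; derive_from_hyps. unfold Fa_yy; ring. Qed.

Lemma is_derive_Fa_x k : is_derive (fun s => Fa a (upd x k s) y) (coord x k) (Fa_x a x y k).
Proof.
  eapply is_derive_val.
  - exact (is_derive_Rplus (fun s => funk (upd x k s) y) (fun s => beta a (upd x k s) y) _ _ _
      (is_derive_funk_x x y Hrad Hdisk k) (is_derive_beta_x a x y Hbeta k)).
  - unfold Fa_x; ring.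
Qed.

Lemma is_derive_Fa_y_x l k :
  is_derive (fun s => Fa_y a (upd x k s) y l) (coord x k) (Fa_yx a x y l k).
Proof. unfold Fa_y; derive_from_hyps. unfold Fa_yx, Fa_yy; ring. Qed.

Lemma is_derive_spray_factor_y k :
  is_derive (fun s => spray_factor a x (upd y k s)) (coord y k) (spray_factor_y a x y k).
Proof. unfold spray_factor; derive_from_hyps. unfold spray_factor_y; ring. Qed.

Lemma is_derive_spray_factor_y_y j k :
  is_derive (fun s => spray_factor_y a x (upd y k s) j) (coord y k) (Fa_yy x y j k / 2).
Proof. unfold spray_factor_y; derive_from_hyps. unfold Fa_yy; field. Qed.

Lemma is_derive_spray_factor_x k :
  is_derive (fun s => spray_factor a (upd x k s) y) (coord x k) (spray_factor_x a x y k).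
Proof. unfold spray_factor; derive_from_hyps. unfold spray_factor_x; field. Qed.

Lemma is_derive_spray_factor_y_x j k :
  is_derive (fun s => spray_factor_y a (upd x k s) y j) (coord x k) (spray_factor_yx a x y j k).
Proof. unfold spray_factor_y; derive_from_hyps. unfold spray_factor_yx, Fa_yy; field. Qed.

Lemma is_derive_hess_scale_x k :
  is_derive (fun s => hess_scale (upd x k s) y) (coord x k)
    (Derive (fun s => hess_scale (upd x k s) y) (coord x k)).
Proof. apply Derive_correct; apply ex_derive_hess_scale_x; assumption. Qed.

End RegularDerivatives.

Global Hint Resolve is_derive_Fa_y is_derive_Fa_y_y is_derive_Fa_x is_derive_Fa_y_x
  is_derive_spray_factor_y is_derive_spray_factor_y_y is_derive_spray_factor_x
  is_derive_spray_factor_y_x is_derive_hess_scale_x : closed_derivatives.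

Lemma regular_locally_y a x y k :
  regular a x y -> locally (coord y k) (fun s => regular a x (upd y k s)).
Proof.
  intros Hreg. pose proof Hreg as (Hy & Hx & Hb & HF).
  assert (Hsqn : locally (coord y k) (fun s => 0 < sqn (upd y k s))).
  { apply locally_pos.
    - destruct y, k; unfold sqn, dot; simpl; auto_derive; auto.
    - rewrite upd_coord; exact Hy. }
  assert (HFa : locally (coord y k) (fun s => 0 < Fa a x (upd y k s))).
  { apply locally_pos; [eexists; apply is_derive_Fa_y, Hreg | rewrite upd_coord; exact HF]. }
  generalize (filter_and _ _ Hsqn HFa); apply filter_imp.
  intros s [Hy' HF']; repeat split; assumption.
Qed.

Lemma regular_locally_x a x y k :
  regular a x y -> locally (coord x k) (fun s => regular a (upd x k s) y).
Proof.
  intros Hreg. pose proof Hreg as (Hy & Hx & Hb & HF).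
  assert (Hdisk : locally (coord x k) (fun s => 0 < 1 - sqn (upd x k s))).
  { apply locally_pos.
    - destruct x, k; unfold sqn, dot; simpl; auto_derive; auto.
    - rewrite upd_coord; exact Hx. }
  assert (Hbeta : locally (coord x k) (fun s => 0 < 1 + dot (a, 0) (upd x k s))).
  { apply locally_pos.
    - destruct x, k; unfold dot; simpl; auto_derive; auto.
    - rewrite upd_coord; exact Hb. }
  assert (HFa : locally (coord x k) (fun s => 0 < Fa a (upd x k s) y)).
  { apply locally_pos; [eexists; apply is_derive_Fa_x, Hreg | rewrite upd_coord; exact HF]. }
  generalize (filter_and _ _ (filter_and _ _ Hdisk Hbeta) HFa); apply filter_imp.
  intros s [[Hx' Hb'] HF']; repeat split; assumption.
Qed.

(* Partial derivatives only see a neighbourhood, so closed forms valid on the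
   regular set can be differentiated in place of the defining expressions. *)
Lemma dY_regular a (h g : R * R -> R * R -> R) x y k l :
  (forall y', regular a x y' -> h x y' = g x y') -> regular a x y ->
  is_derive (fun s => g x (upd y k s)) (coord y k) l -> dY k h x y = l.
Proof.
  intros Hhg Hreg Hd. unfold dY.
  rewrite (Derive_ext_loc _ (fun s => g x (upd y k s))).
  - exact (is_derive_unique _ _ _ Hd).
  - exact (filter_imp _ _ (fun s Hs => Hhg _ Hs) (regular_locally_y a x y k Hreg)).
Qed.

Lemma dX_regular a (h g : R * R -> R * R -> R) x y k l :
  (forall x', regular a x' y -> h x' y = g x' y) -> regular a x y ->
  is_derive (fun s => g (upd x k s) y) (coord x k) l -> dX k h x y = l.
Proof.
  intros Hhg Hreg Hd. unfold dX.
  rewrite (Derive_ext_loc _ (fun s => g (upd x k s) y)).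
  - exact (is_derive_unique _ _ _ Hd).
  - exact (filter_imp _ _ (fun s Hs => Hhg _ Hs) (regular_locally_x a x y k Hreg)).
Qed.

(** * Metric, spray and curvature of [Fa] *)

Lemma dY_Esq a x y j : regular a x y -> dY j (Esq a) x y = 2 * Fa a x y * Fa_y a x y j.
Proof.
  intros Hreg. apply is_derive_unique.
  eapply is_derive_val.
  - apply (is_derive_pow (fun s => Fa a x (upd y j s))); auto with closed_derivatives.
  - rewrite upd_coord; simpl; ring.
Qed.

Lemma gm_regular a x y i j : regular a x y -> gm a i j x y = metric a x y i j.
Proof.
  intros Hreg. unfold gm.
  rewrite (dY_regular a _ (fun x y => 2 * Fa a x y * Fa_y a x y j) x y i
             (2 * (Fa_y a x y i * Fa_y a x y j + Fa a x y * Fa_yy x y j i)));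
    [unfold metric, Fa_yy; field | intros y'; apply dY_Esq | exact Hreg |].
  derive_from_hyps; ring.
Qed.

Lemma dX_gm_regular a x y j l k : regular a x y -> dX k (gm a j l) x y = metric_x a x y j l k.
Proof.
  intros Hreg.
  apply (dX_regular a _ (fun x y => metric a x y j l)); [intros x'; apply gm_regular | exact Hreg |].
  unfold metric, Fa_yy; derive_from_hyps. unfold metric_x, Fa_yy; ring.
Qed.

Lemma regular_euler a x y : regular a x y ->
  funk x y = funk_grad x y 0 * fst y + funk_grad x y 1 * snd y /\
  beta a x y = beta_coef a x 0 * fst y + beta_coef a x 1 * snd y.
Proof.
  intros (Hy & Hx & Hb & _).
  split; symmetry; [apply funk_euler; [apply radicand_pos; auto | lra] | apply beta_euler; lra].
Qed.

(* Euler's relation for the 1-homogeneous [funk] and [beta] reduces the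
   identities between closed forms below to rational identities in [y]. *)
Ltac eliminate_funk_beta Hreg :=
  let Efunk := fresh "Efunk" in let Ebeta := fresh "Ebeta" in
  destruct (regular_euler _ _ _ Hreg) as [Efunk Ebeta];
  unfold nabla2_factor, curv_field_x, curv_field_y, curv_field, metric_x, metric, coord_field,
    spray_factor_yx, spray_factor_x, spray_factor_y, spray_factor, Fa_x, Fa_yx, Fa_yy, Fa_y;
  rewrite ?Fa_split, ?Efunk, ?Ebeta;
  lazymatch type of Hreg with regular _ _ ?y => destruct y as [y0 y1] end; simpl.

Lemma spray_numerator_regular a x y l : regular a x y ->
  sum2 (fun j => sum2 (fun k =>
    (2 * dX k (gm a j l) x y - dX l (gm a j k) x y) * coord y j * coord y k))
  = 4 * spray_factor a x y * (metric a x y l 0 * coord y 0 + metric a x y l 1 * coord y 1).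
Proof.
  intros Hreg. unfold sum2. rewrite !(dX_gm_regular a x y _ _ _ Hreg).
  eliminate_funk_beta Hreg. destruct l; field.
Qed.

Lemma metric_det a x y : regular a x y ->
  metric a x y 0 0 * metric a x y 1 1 - metric a x y 0 1 * metric a x y 1 0
  = Fa a x y ^ 3 * hess_scale x y.
Proof.
  intros Hreg. eliminate_funk_beta Hreg. ring.
Qed.

Lemma Gc_regular a x y i : regular a x y -> Gc a i x y = spray_factor a x y * coord y i.
Proof.
  intros Hreg.
  assert (Hdet : metric a x y 0 0 * metric a x y 1 1 - metric a x y 0 1 * metric a x y 1 0 <> 0).
  { rewrite (metric_det a x y Hreg).
    destruct Hreg as (Hy & Hx & _ & HF).
    pose proof (sqrt_lt_R0 _ (radicand_pos x y Hy Hx)).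
    unfold hess_scale; nonzero. apply Rinv_neq_0_compat; nonzero. }
  unfold Gc. unfold sum2 at 1.
  rewrite (spray_numerator_regular a x y 0 Hreg), (spray_numerator_regular a x y 1 Hreg).
  unfold ginv, gdet. rewrite !(gm_regular a x y _ _ Hreg).
  destruct i; simpl; field; exact Hdet.
Qed.

Lemma G1_regular a x y i j : regular a x y ->
  G1 a i j x y = spray_factor_y a x y j * coord y i + spray_factor a x y * kdelta i j.
Proof.
  intros Hreg.
  apply (dY_regular a _ (fun x y => spray_factor a x y * coord y i));
    [intros y'; apply Gc_regular | exact Hreg |].
  derive_from_hyps; ring.
Qed.

Lemma G2_regular a x y i j k : regular a x y ->
  G2 a i j k x y = Fa_yy x y j k / 2 * coord y i
    + spray_factor_y a x y j * kdelta i k + spray_factor_y a x y k * kdelta i j.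
Proof.
  intros Hreg.
  apply (dY_regular a _
    (fun x y => spray_factor_y a x y j * coord y i + spray_factor a x y * kdelta i j));
    [intros y'; apply G1_regular | exact Hreg |].
  derive_from_hyps; ring.
Qed.

Lemma dX_G1_regular a x y i j k : regular a x y ->
  dX k (G1 a i j) x y = spray_factor_yx a x y j k * coord y i + spray_factor_x a x y k * kdelta i j.
Proof.
  intros Hreg.
  apply (dX_regular a _
    (fun x y => spray_factor_y a x y j * coord y i + spray_factor a x y * kdelta i j));
    [intros x'; apply G1_regular | exact Hreg |].
  derive_from_hyps; ring.
Qed.

Lemma Rc01_regular a x y i : regular a x y -> Rc a i 0 1 x y = curv_field a x y i.
Proof.
  intros Hreg. unfold Rc, sum2.
  rewrite !(dX_G1_regular a x y _ _ _ Hreg), !(G1_regular a x y _ _ Hreg),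
    !(G2_regular a x y _ _ _ Hreg).
  eliminate_funk_beta Hreg. destruct i as [|[|i]]; simpl; field.
Qed.

Lemma is_derive_curv_field_x a x y i j : regular a x y ->
  is_derive (fun s => curv_field a (upd x j s) y i) (coord x j) (curv_field_x a x y i j).
Proof. intros Hreg. unfold curv_field; derive_from_hyps. unfold curv_field_x; ring. Qed.

Lemma is_derive_curv_field_y a x y i k : regular a x y ->
  is_derive (fun s => curv_field a x (upd y k s) i) (coord y k) (curv_field_y a x y i k).
Proof. intros Hreg. unfold curv_field; derive_from_hyps. unfold curv_field_y; ring. Qed.

Global Hint Resolve is_derive_curv_field_x is_derive_curv_field_y : closed_derivatives.

Definition curv01 (a : R) : vfield := curv a (coord_field 0) (coord_field 1).

Lemma curv01_Rc a i x y : curv01 a i x y = Rc a i 0 1 x y.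
Proof. unfold curv01, curv, sum2, coord_field; simpl. ring. Qed.

Lemma curv01_regular a x y i : regular a x y -> curv01 a i x y = curv_field a x y i.
Proof. intros Hreg. rewrite curv01_Rc. exact (Rc01_regular a x y i Hreg). Qed.

Lemma dX_curv01_regular a x y i j : regular a x y -> dX j (curv01 a i) x y = curv_field_x a x y i j.
Proof.
  intros Hreg. apply (dX_regular a _ (fun x y => curv_field a x y i));
    [intros x'; apply curv01_regular | exact Hreg | auto with closed_derivatives].
Qed.

Lemma dY_curv01_regular a x y i k : regular a x y -> dY k (curv01 a i) x y = curv_field_y a x y i k.
Proof.
  intros Hreg. apply (dY_regular a _ (fun x y => curv_field a x y i));
    [intros y'; apply curv01_regular | exact Hreg | auto with closed_derivatives].
Qed.

Lemma nabla_curv01_regular a x y i m : regular a x y -> (m < 2)%nat ->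
  nabla a (coord_field m) (curv01 a) i x y = 3 * spray_factor_y a x y m * curv_field a x y i.
Proof.
  intros Hreg Hm. unfold nabla, sum2.
  rewrite !(dX_curv01_regular a x y _ _ Hreg), !(dY_curv01_regular a x y _ _ Hreg),
    !(G1_regular a x y _ _ Hreg), !(G2_regular a x y _ _ _ Hreg), !(curv01_regular a x y _ Hreg).
  eliminate_funk_beta Hreg. destruct i as [|[|i]], m as [|[|m]]; try lia; simpl; field.
Qed.

Definition nabla_curv01 (a : R) (m : nat) : vfield := nabla a (coord_field m) (curv01 a).

Lemma dX_nabla_curv01_regular a x y i m n : regular a x y -> (m < 2)%nat ->
  dX n (nabla_curv01 a m i) x y
  = 3 * (spray_factor_yx a x y m n * curv_field a x y i
         + spray_factor_y a x y m * curv_field_x a x y i n).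
Proof.
  intros Hreg Hm.
  apply (dX_regular a _ (fun x y => 3 * spray_factor_y a x y m * curv_field a x y i));
    [intros x' H'; exact (nabla_curv01_regular a x' y i m H' Hm) | exact Hreg |].
  derive_from_hyps; ring.
Qed.

Lemma dY_nabla_curv01_regular a x y i m n : regular a x y -> (m < 2)%nat ->
  dY n (nabla_curv01 a m i) x y
  = 3 * (Fa_yy x y m n / 2 * curv_field a x y i + spray_factor_y a x y m * curv_field_y a x y i n).
Proof.
  intros Hreg Hm.
  apply (dY_regular a _ (fun x y => 3 * spray_factor_y a x y m * curv_field a x y i));
    [intros y' H'; exact (nabla_curv01_regular a x y' i m H' Hm) | exact Hreg |].
  derive_from_hyps; ring.
Qed.

Lemma nabla2_curv01_regular a x y i m k : regular a x y -> (m < 2)%nat -> (k < 2)%nat ->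
  nabla a (coord_field k) (nabla_curv01 a m) i x y = nabla2_factor a x y m k * curv_field a x y i.
Proof.
  intros Hreg Hm Hk. unfold nabla at 1, sum2.
  rewrite !(dX_nabla_curv01_regular a x y _ _ _ Hreg Hm),
    !(dY_nabla_curv01_regular a x y _ _ _ Hreg Hm),
    !(G1_regular a x y _ _ Hreg), !(G2_regular a x y _ _ _ Hreg).
  unfold nabla_curv01; rewrite !(nabla_curv01_regular a x y _ _ Hreg Hm).
  eliminate_funk_beta Hreg.
  destruct i as [|[|i]], m as [|[|m]], k as [|[|k]]; try lia; simpl; field.
Qed.

Lemma pder_const (c : R) l p : pder l (fun _ => c) p = match l with nil => c | _ => 0 end.
Proof.
  revert p; induction l as [|j l IH]; intros p; simpl; [reflexivity|].
  rewrite (Derive_ext _ (fun _ => match l with nil => c | _ => 0 end)); [apply Derive_const|].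
  intros t; apply IH.
Qed.

Lemma smooth_on_disk_const (c : R) : smooth_on_disk (fun _ => c).
Proof.
  intros l p _. split.
  - apply (continuous_ext (fun _ => match l with nil => c | _ => 0 end)); [|apply continuous_const].
    intros q; symmetry; apply pder_const.
  - intros j.
    apply (ex_derive_ext (fun _ => match l with nil => c | _ => 0 end)); [|apply ex_derive_const].
    intros t; symmetry; apply pder_const.
Qed.

Lemma smooth_coord_field m : smooth_vf (coord_field m).
Proof.
  split; [exact (smooth_on_disk_const (kdelta m 0)) | exact (smooth_on_disk_const (kdelta m 1))].
Qed.

Lemma hol_curv01 a : hol a (curv01 a).
Proof. exact (hol_curv a _ _ (smooth_coord_field 0) (smooth_coord_field 1)). Qed.

Lemma hol_nabla_curv01 a m : hol a (nabla_curv01 a m).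
Proof. exact (hol_nabla a _ _ (smooth_coord_field m) (hol_curv01 a)). Qed.

Lemma hol_nabla2_curv01 a m k : hol a (nabla a (coord_field k) (nabla_curv01 a m)).
Proof. exact (hol_nabla a _ _ (smooth_coord_field k) (hol_nabla_curv01 a m)). Qed.

(** * Multipliers of the curvature field at the origin *)

Definition origin : R * R := (0, 0).

Lemma radicand_origin y : radicand origin y = sqn y.
Proof. unfold radicand, origin, sqn at 2, dot; simpl; ring. Qed.

Lemma Fa_origin a y : Fa a origin y = sqrt (sqn y) + a * fst y.
Proof.
  rewrite Fa_split; unfold funk, beta; rewrite radicand_origin.
  replace (sqn origin) with 0 by (unfold sqn, dot, origin; simpl; ring).
  replace (dot origin y) with 0 by (unfold dot, origin; simpl; ring).
  replace (dot (a, 0) origin) with 0 by (unfold dot, origin; simpl; ring).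
  unfold dot; simpl; field.
Qed.

Lemma regular_origin a y : Rabs a < 1 -> 0 < sqn y -> regular a origin y.
Proof.
  intros Ha Hy. unfold regular, origin, sqn at 2, dot; simpl.
  split; [exact Hy|]. split; [lra|]. split; [lra|].
  rewrite Fa_origin.
  assert (Hy0 : Rabs (fst y) <= sqrt (sqn y)).
  { rewrite <- sqrt_Rsqr_abs. apply sqrt_le_1_alt.
    unfold Rsqr, sqn, dot. pose proof (Rle_0_sqr (snd y)). unfold Rsqr in *. lra. }
  pose proof (sqrt_lt_R0 _ Hy) as Hpos.
  assert (Hay : Rabs a * Rabs (fst y) < sqrt (sqn y)).
  { apply (Rle_lt_trans _ (Rabs a * sqrt (sqn y))).
    - apply Rmult_le_compat_l; [apply Rabs_pos | exact Hy0].
    - rewrite <- (Rmult_1_l (sqrt (sqn y))) at 2. apply Rmult_lt_compat_r; assumption. }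
  rewrite <- Rabs_mult in Hay. destruct (Rabs_def2 _ _ Hay). lra.
Qed.

Ltac split_Forall := first [apply Forall_nil | apply Forall_cons; [simpl | split_Forall]].

Section Multipliers.
Variable a : R.
Hypothesis Ha : Rabs a < 1.

Definition holonomy_multiplier (h : R * R -> R) : Prop :=
  exists xi, hol a xi /\
    forall y, 0 < sqn y -> forall i, xi i origin y = h y * curv_field a origin y i.

Lemma multiplier_span (hs : list (R * (R * R -> R))%type) (h : R * R -> R) :
  List.Forall (fun ch => holonomy_multiplier (snd ch)) hs ->
  (forall y, 0 < sqn y -> h y = fold_right (fun ch acc => fst ch * snd ch y + acc) 0 hs) ->
  holonomy_multiplier h.
Proof.
  revert h; induction hs as [|[c g] hs IH]; intros h Hall Eh.
  - exists (fun i x y => 0 * curv01 a i x y). split; [apply hol_scal, hol_curv01|].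
    intros y Hy i. rewrite Eh by exact Hy. simpl; ring.
  - inversion Hall as [|? ? [xi [Hxi Exi]] Hrest]; subst.
    destruct (IH (fun y => fold_right (fun ch acc => fst ch * snd ch y + acc) 0 hs) Hrest)
      as [eta [Heta Eeta]]; [reflexivity|].
    exists (fun i x y => c * xi i x y + eta i x y).
    split; [apply hol_add; [apply hol_scal|]; assumption|].
    intros y Hy i. rewrite Eh, Exi, Eeta by exact Hy. simpl; ring.
Qed.

Lemma multiplier_one : holonomy_multiplier (fun _ => 1).
Proof.
  exists (curv01 a). split; [apply hol_curv01|].
  intros y Hy i. rewrite curv01_regular by (apply regular_origin; assumption). ring.
Qed.

Lemma multiplier_spray_factor_y m : (m < 2)%nat ->
  holonomy_multiplier (fun y => 3 * spray_factor_y a origin y m).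
Proof.
  intros Hm. exists (nabla_curv01 a m). split; [apply hol_nabla_curv01|].
  intros y Hy i. apply nabla_curv01_regular; [apply regular_origin|]; assumption.
Qed.

Lemma multiplier_nabla2_factor m k : (m < 2)%nat -> (k < 2)%nat ->
  holonomy_multiplier (fun y => nabla2_factor a origin y m k).
Proof.
  intros Hm Hk. exists (nabla a (coord_field k) (nabla_curv01 a m)).
  split; [apply hol_nabla2_curv01|].
  intros y Hy i. apply nabla2_curv01_regular; [apply regular_origin | |]; assumption.
Qed.

Definition along_curv (dh : R * R -> nat -> R) (y : R * R) : R :=
  sum2 (fun k => curv_field a origin y k * dh y k).

Lemma dY_origin_multiple (xi : vfield) (h : R * R -> R) (dh : R * R -> nat -> R) y i k :
  (forall y, 0 < sqn y -> xi i origin y = h y * curv_field a origin y i) ->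
  (forall y k, 0 < sqn y -> is_derive (fun s => h (upd y k s)) (coord y k) (dh y k)) ->
  0 < sqn y ->
  dY k (xi i) origin y = dh y k * curv_field a origin y i + h y * curv_field_y a origin y i k.
Proof.
  intros Exi Dh Hy.
  apply (dY_regular a _ (fun x y => h y * curv_field a x y i));
    [intros y' [Hy' _]; exact (Exi y' Hy') | apply regular_origin; assumption |].
  pose proof (Dh y k Hy). pose proof (regular_origin a y Ha Hy).
  derive_from_hyps; ring.
Qed.

(* For vertical fields, [[h1 xi, h2 xi] = (h1 xi(h2) - h2 xi(h1)) xi]. *)
Lemma multiplier_bracket h1 h2 d1 d2 :
  holonomy_multiplier h1 -> holonomy_multiplier h2 ->
  (forall y k, 0 < sqn y -> is_derive (fun s => h1 (upd y k s)) (coord y k) (d1 y k)) ->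
  (forall y k, 0 < sqn y -> is_derive (fun s => h2 (upd y k s)) (coord y k) (d2 y k)) ->
  holonomy_multiplier (fun y => h1 y * along_curv d2 y - h2 y * along_curv d1 y).
Proof.
  intros [xi1 [H1 E1]] [xi2 [H2 E2]] D1 D2.
  exists (vbracket xi1 xi2). split; [apply hol_bracket; assumption|].
  intros y Hy i. unfold vbracket, along_curv, sum2.
  rewrite !(dY_origin_multiple xi1 h1 d1), !(dY_origin_multiple xi2 h2 d2), !E1, !E2 by auto.
  ring.
Qed.

End Multipliers.

Definition enorm (y : R * R) : R := sqrt (sqn y).
Definition dir (y : R * R) (l : nat) : R := coord y l / enorm y.

Lemma enorm_pos y : 0 < sqn y -> 0 < enorm y.
Proof. apply sqrt_lt_R0. Qed.

Lemma enorm_sq y : 0 < sqn y -> enorm y * enorm y = sqn y.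
Proof. intros; apply sqrt_sqrt; lra. Qed.

Lemma dir_circle y : 0 < sqn y -> dir y 1 * dir y 1 = 1 - dir y 0 * dir y 0.
Proof.
  intros Hy. pose proof (enorm_pos y Hy). pose proof (enorm_sq y Hy) as Hn.
  destruct y as [y0 y1]; unfold dir, sqn, dot in *; simpl in *. field [Hn]. lra.
Qed.

Ltac at_origin y Hy :=
  pose proof (enorm_pos _ Hy) as Hnorm; pose proof (enorm_sq _ Hy) as Hsq;
  unfold curv_field, nabla2_factor, curv_field_y, spray_factor_y, Fa_yy, hess_scale, Fa_y,
    funk_grad, beta_coef; rewrite ?Fa_origin, ?radicand_origin;
  unfold dir, enorm in *;
  let y0 := fresh "y0" in let y1 := fresh "y1" in
  destruct y as [y0 y1]; unfold origin, sqn, dot, kdelta in *; simpl in *.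

Lemma curv_field_origin a y i : 0 < sqn y ->
  curv_field a origin y i
  = enorm y * (1 + a * dir y 0) / 4 * (kdelta i 0 * dir y 1 - kdelta i 1 * (dir y 0 + a)).
Proof. intros Hy. at_origin y Hy. destruct i as [|[|i]]; field [Hsq]; lra. Qed.

Lemma spray_factor_y0_origin a y : 0 < sqn y -> spray_factor_y a origin y 0 = (dir y 0 - a) / 2.
Proof. intros Hy. at_origin y Hy. field; lra. Qed.

Lemma spray_factor_y1_origin a y : 0 < sqn y -> spray_factor_y a origin y 1 = dir y 1 / 2.
Proof. intros Hy. at_origin y Hy. field; lra. Qed.

Lemma nabla2_factor_origin a y : 0 < sqn y ->
  nabla2_factor a origin y 1 0
  = 3 / 4 * (dir y 1 * (dir y 0 + a) - (1 + a * dir y 0) * dir y 0 * dir y 1)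
    + 3 * dir y 1 * (dir y 0 - a).
Proof. intros Hy. at_origin y Hy. field [Hsq]; lra. Qed.

Definition dir_y (y : R * R) (l k : nat) : R := (kdelta l k - dir y l * dir y k) / enorm y.

Lemma is_derive_dir y l k : 0 < sqn y ->
  is_derive (fun s => dir (upd y k s) l) (coord y k) (dir_y y l k).
Proof.
  intros Hy. pose proof (enorm_pos _ Hy) as Hp. pose proof (enorm_sq _ Hy) as Hn.
  unfold dir_y, dir, enorm, kdelta in *. destruct y as [y0 y1]; unfold sqn, dot in *; simpl in *.
  destruct k, l; simpl; auto_derive; nonzero; field [Hn]; lra.
Qed.

Lemma along_curv_dir0 a y : 0 < sqn y ->
  along_curv a (fun y k => dir_y y 0 k) y = (1 + a * dir y 0) ^ 2 * dir y 1 / 4.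
Proof.
  intros Hy. unfold along_curv, sum2. rewrite !curv_field_origin by exact Hy.
  pose proof (enorm_pos _ Hy). unfold dir_y, kdelta; simpl. field. lra.
Qed.

Lemma along_curv_dir1 a y : 0 < sqn y ->
  along_curv a (fun y k => dir_y y 1 k) y = - (1 + a * dir y 0) ^ 2 * dir y 0 / 4.
Proof.
  intros Hy. unfold along_curv, sum2. rewrite !curv_field_origin by exact Hy.
  pose proof (enorm_pos _ Hy). pose proof (dir_circle y Hy) as Hc.
  unfold dir_y, kdelta; simpl. field [Hc]. lra.
Qed.

(** * Monomials in [cos t] and [sin t] *)

Definition mon (l m : nat) (y : R * R) : R := dir y 1 ^ l * dir y 0 ^ m.

Definition mon_y (l m : nat) (y : R * R) (k : nat) : R :=
  INR l * dir_y y 1 k * dir y 1 ^ pred l * dir y 0 ^ m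
  + dir y 1 ^ l * (INR m * dir_y y 0 k * dir y 0 ^ pred m).

Lemma is_derive_mon l m y k : 0 < sqn y ->
  is_derive (fun s => mon l m (upd y k s)) (coord y k) (mon_y l m y k).
Proof.
  intros Hy. unfold mon. eapply is_derive_val.
  - apply (is_derive_Rmult (fun s => dir (upd y k s) 1 ^ l) (fun s => dir (upd y k s) 0 ^ m));
      apply (is_derive_pow (fun s => dir (upd y k s) _)), is_derive_dir, Hy.
  - rewrite upd_coord. unfold mon_y. ring.
Qed.

Definition mon_along (a : R) (l m : nat) (y : R * R) : R :=
  INR l * dir y 1 ^ pred l * dir y 0 ^ m * (- (1 + a * dir y 0) ^ 2 * dir y 0 / 4)
  + INR m * dir y 1 ^ l * dir y 0 ^ pred m * ((1 + a * dir y 0) ^ 2 * dir y 1 / 4).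

Lemma along_curv_mon a l m y : 0 < sqn y -> along_curv a (mon_y l m) y = mon_along a l m y.
Proof.
  intros Hy. unfold mon_along. rewrite <- (along_curv_dir0 a y Hy), <- (along_curv_dir1 a y Hy).
  unfold along_curv, sum2, mon_y. ring.
Qed.

Definition mon_bracket (a : R) (l1 m1 l2 m2 : nat) (y : R * R) : R :=
  mon l1 m1 y * mon_along a l2 m2 y - mon l2 m2 y * mon_along a l1 m1 y.

Lemma multiplier_mon_bracket a l1 m1 l2 m2 : Rabs a < 1 ->
  holonomy_multiplier a (mon l1 m1) -> holonomy_multiplier a (mon l2 m2) ->
  holonomy_multiplier a (mon_bracket a l1 m1 l2 m2).
Proof.
  intros Ha H1 H2.
  apply (multiplier_span a [(1, fun y => mon l1 m1 y * along_curv a (mon_y l2 m2) y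
                                        - mon l2 m2 y * along_curv a (mon_y l1 m1) y)]).
  - split_Forall. apply multiplier_bracket; auto; intros; apply is_derive_mon; assumption.
  - intros y Hy; simpl. rewrite !along_curv_mon by exact Hy. unfold mon_bracket; ring.
Qed.

Ltac span_of hs :=
  apply (multiplier_span _ hs);
  [ split_Forall | intros y Hy; unfold mon_bracket, mon_along, mon; rewrite ?S_INR; simpl ].

Section Monomials.
Variable a : R.
Hypotheses (Ha : Rabs a < 1) (Ha0 : a <> 0).

Lemma multiplier_mon00 : holonomy_multiplier a (mon 0 0).
Proof. span_of [(1, fun _ : R * R => 1)]; [apply multiplier_one, Ha | ring]. Qed.

Lemma multiplier_mon01 : holonomy_multiplier a (mon 0 1).
Proof.
  span_of [(2 / 3, fun y => 3 * spray_factor_y a origin y 0); (a, fun _ => 1)].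
  - apply multiplier_spray_factor_y; [exact Ha | lia].
  - apply multiplier_one, Ha.
  - rewrite spray_factor_y0_origin by exact Hy. field.
Qed.

Lemma multiplier_mon10 : holonomy_multiplier a (mon 1 0).
Proof.
  span_of [(2 / 3, fun y => 3 * spray_factor_y a origin y 1)].
  - apply multiplier_spray_factor_y; [exact Ha | lia].
  - rewrite spray_factor_y1_origin by exact Hy. field.
Qed.

Lemma multiplier_mon02 : holonomy_multiplier a (mon 0 2).
Proof.
  (* [mon_bracket a 0 1 1 0 = - (1 + a cos t)^2 / 4]. *)
  span_of [(- 4 / (a * a), mon_bracket a 0 1 1 0); (- 1 / (a * a), mon 0 0); (- 2 / a, mon 0 1)].
  - apply multiplier_mon_bracket; [exact Ha | apply multiplier_mon01 | apply multiplier_mon10].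
  - apply multiplier_mon00.
  - apply multiplier_mon01.
  - pose proof (dir_circle y Hy) as Hc. field [Hc]. exact Ha0.
Qed.

Lemma multiplier_mon11 : holonomy_multiplier a (mon 1 1).
Proof.
  (* The [a cos^2 t sin t] terms of the first two multipliers cancel. *)
  span_of [(4 / 18, fun y => nabla2_factor a origin y 1 0); (12 / (18 * a), mon_bracket a 0 0 0 1);
           (- (3 / a - 9 * a) / 18, mon 1 0)].
  - apply multiplier_nabla2_factor; [exact Ha | lia | lia].
  - apply multiplier_mon_bracket; [exact Ha | apply multiplier_mon00 | apply multiplier_mon01].
  - apply multiplier_mon10.
  - rewrite nabla2_factor_origin by exact Hy. pose proof (dir_circle y Hy) as Hc.
    field [Hc]. exact Ha0.
Qed.

Lemma multiplier_mon20 : holonomy_multiplier a (mon 2 0).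
Proof.
  span_of [(1, mon 0 0); (- 1, mon 0 2)]; [apply multiplier_mon00 | apply multiplier_mon02 |].
  pose proof (dir_circle y Hy) as Hc. ring [Hc].
Qed.

Definition monomials_upto (N : nat) : Prop :=
  forall l m, (l + m <= N)%nat -> holonomy_multiplier a (mon l m).

Lemma monomials_upto_2 : monomials_upto 2.
Proof.
  intros l m H.
  destruct l as [|[|[|l]]], m as [|[|[|m]]]; try lia;
    first [ apply multiplier_mon00 | apply multiplier_mon01 | apply multiplier_mon02
          | apply multiplier_mon10 | apply multiplier_mon11 | apply multiplier_mon20 ].
Qed.

Lemma multiplier_mon1_succ n : monomials_upto (n + 2) -> holonomy_multiplier a (mon 1 (S (S n))).
Proof.
  intros HT.
  span_of [(4 / (a * a * INR (S n)), mon_bracket a 0 0 0 (S n)); (- 1 / (a * a), mon 1 n);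
           (- 2 / a, mon 1 (S n))];
    [apply multiplier_mon_bracket; [exact Ha | apply HT; lia | apply HT; lia] | apply HT; lia
    | apply HT; lia |].
  pose proof (pos_INR n). field. split; [exact Ha0 | lra].
Qed.

Lemma multiplier_mon0_succ n :
  monomials_upto (n + 2) -> holonomy_multiplier a (mon 0 (S (S (S n)))).
Proof.
  intros HT. destruct n as [|n].
  - span_of [(- 4 / (a * a), mon_bracket a 0 0 1 0); (- 1 / (a * a), mon 0 1); (- 2 / a, mon 0 2)];
      [apply multiplier_mon_bracket; [exact Ha | apply HT; lia | apply HT; lia] | apply HT; lia
      | apply HT; lia |].
    field. exact Ha0.
  - pose proof (pos_INR n) as Hn.
    set (q := (INR n + 2) * (a * a)).
    assert (Hq : q <> 0) by (unfold q; nonzero).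
    span_of [(- 4 / q, mon_bracket a 0 0 1 (S n)); ((INR n + 1) / q, mon 0 n);
             ((INR n + 1) * 2 * a / q, mon 0 (S n));
             (((INR n + 1) * a * a - (INR n + 2)) / q, mon 0 (S (S n)));
             (- (INR n + 2) * 2 * a / q, mon 0 (S (S (S n))))];
      [apply multiplier_mon_bracket; [exact Ha | apply HT; lia | apply HT; lia]
      | apply HT; lia | apply HT; lia | apply HT; lia | apply HT; lia |].
    pose proof (dir_circle y Hy) as Hc. unfold q in *. field [Hc]. split; [exact Ha0 | lra].
Qed.

Lemma monomials_upto_succ n : monomials_upto (n + 2) -> monomials_upto (n + 3).
Proof.
  intros HT l m Hlm.
  destruct (Nat.le_gt_cases (l + m) (n + 2)) as [Hle | Hgt]; [exact (HT l m Hle)|].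
  assert (Hdeg : (l + m = n + 3)%nat) by lia. clear Hlm Hgt.
  revert m Hdeg. induction l as [l IH] using (well_founded_induction lt_wf). intros m Hdeg.
  destruct l as [|[|l]].
  - replace m with (S (S (S n))) by lia. apply multiplier_mon0_succ, HT.
  - replace m with (S (S n)) by lia. apply multiplier_mon1_succ, HT.
  - span_of [(1, mon l m); (- 1, mon l (S (S m)))];
      [apply HT; lia | apply IH; lia |].
    pose proof (dir_circle y Hy) as Hc. ring [Hc].
Qed.

Lemma monomials_upto_all N : monomials_upto N.
Proof.
  assert (H : forall n, monomials_upto (n + 2)).
  { induction n as [|n IH]; [exact monomials_upto_2|].
    replace (S n + 2)%nat with (n + 3)%nat by lia. exact (monomials_upto_succ n IH). }
  intros l m Hlm. apply (H N); lia.
Qed.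

End Monomials.

Lemma multiplier_sum_f_R0 a (f : nat -> R * R -> R) n :
  (forall l, (l <= n)%nat -> holonomy_multiplier a (f l)) ->
  holonomy_multiplier a (fun y => sum_f_R0 (fun l => f l y) n).
Proof.
  induction n as [|n IH]; intros Hf; [apply Hf; lia|].
  apply (multiplier_span a [(1, fun y => sum_f_R0 (fun l => f l y) n); (1, f (S n))]).
  - split_Forall; [apply IH; intros; apply Hf | apply Hf]; lia.
  - intros y _. simpl. ring.
Qed.

Lemma multiplier_polynomial a (c : nat -> nat -> R) n : Rabs a < 1 -> a <> 0 ->
  holonomy_multiplier a (fun y =>
    sum_f_R0 (fun l => sum_f_R0 (fun m => c l m * (dir y 1 ^ l * dir y 0 ^ m)) (n - l)) n).
Proof.
  intros Ha Ha0.
  apply (multiplier_sum_f_R0 a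
    (fun l y => sum_f_R0 (fun m => c l m * (dir y 1 ^ l * dir y 0 ^ m)) (n - l))).
  intros l _.
  apply (multiplier_sum_f_R0 a (fun m y => c l m * (dir y 1 ^ l * dir y 0 ^ m))).
  intros m _.
  apply (multiplier_span a [(c l m, mon l m)]).
  - split_Forall. apply (monomials_upto_all a Ha Ha0 (l + m)); lia.
  - intros y _. unfold mon; simpl. ring.
Qed.

Lemma gam_dir a t : Rabs a < 1 ->
  0 < sqn (gam a t) /\ dir (gam a t) 0 = cos t /\ dir (gam a t) 1 = sin t.
Proof.
  intros Ha.
  assert (Hd : 0 < 1 + a * cos t).
  { assert (Hc : Rabs (a * cos t) < 1).
    { rewrite Rabs_mult. pose proof (COS_bound t).
      assert (Rabs (cos t) <= 1) by (apply Rabs_le; lra).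
      pose proof (Rabs_pos a). pose proof (Rabs_pos (cos t)). nra. }
    destruct (Rabs_def2 _ _ Hc); lra. }
  assert (Hsc : cos t * cos t = 1 - sin t * sin t)
    by (pose proof (sin2_cos2 t); unfold Rsqr in *; lra).
  assert (Hs : sqn (gam a t) = (/ (1 + a * cos t)) ^ 2).
  { unfold sqn, dot, gam; simpl. field [Hsc]. lra. }
  assert (Hn : enorm (gam a t) = / (1 + a * cos t)).
  { unfold enorm. rewrite Hs. apply sqrt_pow2, Rlt_le, Rinv_0_lt_compat; lra. }
  split; [rewrite Hs; apply pow_lt, Rinv_0_lt_compat; lra|].
  unfold dir. rewrite Hn. unfold gam; simpl. split; field; lra.
Qed.

Theorem lemma3p2 (a1 : R) (ha0 : a1 <> 0) (ha1 : Rabs a1 < 1)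
  (n : nat) (c : nat -> nat -> R) :
  exists xi : vfield, hol a1 xi /\
    forall (t : R) (i : nat), (i < 2)%nat ->
      xi i (0, 0) (gam a1 t) =
        sum_f_R0 (fun l => sum_f_R0 (fun m =>
            c l m * (sin t ^ l * cos t ^ m)) (n - l)) n
        * xi0 a1 i (gam a1 t).
Proof.
  destruct (multiplier_polynomial a1 c n ha1 ha0) as [xi [Hhol Hxi]].
  exists xi. split; [exact Hhol|].
  intros t i _.
  destruct (gam_dir a1 t ha1) as (Hpos & Hcos & Hsin).
  unfold xi0. change (0, 0) with origin.
  rewrite (Hxi _ Hpos), (Rc01_regular a1 origin (gam a1 t) i (regular_origin a1 _ ha1 Hpos)).
  rewrite Hcos, Hsin.
  reflexivity.
Qed.
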